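(* Let $J_1,J_2,k_1,k_2,h,E_1,E_2>0$ and $T_s>0$, and consider the batch reactor system $$\dot c_A=-k_1e^{-E_1/T}c_A,\quad \dot c_B=k_1e^{-E_1/T}c_A-k_2e^{-E_2/T}c_B,\quad \dot T=J_1k_1e^{-E_1/T}c_A+J_2k_2e^{-E_2/T}c_B+h(T_s-T),$$ with output $T$, on the state set $D\times\Omega$ where $D=(0,\bar c_A)\times(0,\bar c_B)$, $\Omega=(T_{\min},T_{\max})$, and the constants satisfy $\bar c_A>0$, $0<T_{\min}\le T_s$, $\frac{k_1}{k_2}\bar c_A<\bar c_B$ if $E_1\ge E_2$ and $\frac{k_1}{k_2}e^{(E_2-E_1)/T_{\min}}\bar c_A<\bar c_B$ if $E_1<E_2$, and $\frac{J_1k_1\bar c_A+J_2k_2\bar c_B}{h}+T_s\le T_{\max}$. (Then $D\times\Omega$ is positively invariant and solutions exist and are unique for all $t\ge0$.) Assume one of the following: (A1) if $E_1=E_2$ then $(J_1+J_2)k_2\ne J_1k_1$; if $E_1\ne E_2$ then there exists $a>0$ such that for all $T\in(T_{\min},T_{\max})$ with $\frac{T^2}{(E_2-E_1)J_1h}e^{-E_2/T}\big[(J_1+J_2)k_2-J_1k_1e^{(E_2-E_1)/T}\big]+T>T_s$ one has $\frac{T^2}{(E_2-E_1)J_1}e^{-E_2/T}\big[(J_1+J_2)k_2-J_1k_1e^{(E_2-E_1)/T}\big]\le -a$; (A2) the same as (A1) but with the last inequality replaced by $\frac{T^2}{(E_2-E_1)J_1}e^{-E_2/T}\big[(J_1+J_2)k_2-J_1k_1e^{(E_2-E_1)/T}\big]\ge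 a$. Then the system is strongly observable in time $r$ for every $r>0$ if $E_1=E_2$, and for every $r\ge\frac{T_{\max}-T_{\min}}{a}$ if $E_1\ne E_2$; that is, for any two distinct initial states in $D\times\Omega$, the corresponding temperature outputs $T(\cdot)$ differ at some time in $[0,r]$.
   Context: Strong observability in time $r$ here means: for every pair of initial states $(c_{A,0},c_{B,0},T_0)\neq(\tilde c_{A,0},\tilde c_{B,0},\tilde T_0)$ in $D\times\Omega$, $\max_{t\in[0,r]}|T(t)-\tilde T(t)|>0$, where $T(\cdot),\tilde T(\cdot)$ are the temperature components of the corresponding solutions (the system has no control input). *)

From Stdlib Require Import Reals Lra.
From Coquelicot Require Import Coquelicot.
Open Scope R_scope.

Definition f_cA (k1 E1 cA T : R) : R := - k1 * exp (- E1 / T) * cA.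
Definition f_cB (k1 k2 E1 E2 cA cB T : R) : R :=
  k1 * exp (- E1 / T) * cA - k2 * exp (- E2 / T) * cB.
Definition f_T (J1 J2 k1 k2 h E1 E2 Ts cA cB T : R) : R :=
  J1 * k1 * exp (- E1 / T) * cA + J2 * k2 * exp (- E2 / T) * cB + h * (Ts - T).

Definition is_solution (J1 J2 k1 k2 h E1 E2 Ts : R) (cA cB T : R -> R) : Prop :=
  (forall t, 0 < t ->
      is_derive cA t (f_cA k1 E1 (cA t) (T t)) /\
      is_derive cB t (f_cB k1 k2 E1 E2 (cA t) (cB t) (T t)) /\
      is_derive T t (f_T J1 J2 k1 k2 h E1 E2 Ts (cA t) (cB t) (T t))) /\
  filterlim cA (at_right 0) (locally (cA 0)) /\
  filterlim cB (at_right 0) (locally (cB 0)) /\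
  filterlim T (at_right 0) (locally (T 0)).

Definition in_state_set (cAbar cBbar Tmin Tmax cA cB T : R) : Prop :=
  0 < cA < cAbar /\ 0 < cB < cBbar /\ Tmin < T < Tmax.

Definition strongly_observable (J1 J2 k1 k2 h E1 E2 Ts cAbar cBbar Tmin Tmax r : R)
  : Prop :=
  forall cA cB T cA' cB' T' : R -> R,
    is_solution J1 J2 k1 k2 h E1 E2 Ts cA cB T ->
    is_solution J1 J2 k1 k2 h E1 E2 Ts cA' cB' T' ->
    in_state_set cAbar cBbar Tmin Tmax (cA 0) (cB 0) (T 0) ->
    in_state_set cAbar cBbar Tmin Tmax (cA' 0) (cB' 0) (T' 0) ->
    (cA 0, cB 0, T 0) <> (cA' 0, cB' 0, T' 0) ->
    exists t, 0 <= t <= r /\ T t <> T' t.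

Definition G (J1 J2 k1 k2 E1 E2 T : R) : R :=
  T ^ 2 / ((E2 - E1) * J1) * exp (- E2 / T) *
  ((J1 + J2) * k2 - J1 * k1 * exp ((E2 - E1) / T)).

Definition trig (J1 J2 k1 k2 h E1 E2 Ts T : R) : Prop :=
  T ^ 2 / ((E2 - E1) * J1 * h) * exp (- E2 / T) *
  ((J1 + J2) * k2 - J1 * k1 * exp ((E2 - E1) / T)) + T > Ts.

Definition cond_A1 (J1 J2 k1 k2 h E1 E2 Ts Tmin Tmax a : R) : Prop :=
  forall T, Tmin < T < Tmax -> trig J1 J2 k1 k2 h E1 E2 Ts T ->
    G J1 J2 k1 k2 E1 E2 T <= - a.
Definition cond_A2 (J1 J2 k1 k2 h E1 E2 Ts Tmin Tmax a : R) : Prop :=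
  forall T, Tmin < T < Tmax -> trig J1 J2 k1 k2 h E1 E2 Ts T ->
    G J1 J2 k1 k2 E1 E2 T >= a.

From Stdlib Require Import Reals Lra Classical.
From Coquelicot Require Import Coquelicot.
Open Scope R_scope.

(* Along solutions the state never leaves D x Omega: on each face of the box the vector
   field points inward up to a linear term, so a Gronwall estimate keeps every coordinate
   strictly between its bounds, and a continuation argument propagates this to all times.

   Let two solutions have the same temperature on [0, r], and put x = cA - cA',
   y = cB - cB'.  Then x' = - k1 e^{-E1/T} x, and equality of the temperature derivatives
   gives the heat balance J1 k1 e^{-E1/T} x + J2 k2 e^{-E2/T} y = 0.  Hence x vanishes on
   (0, r) iff x(0) = 0, and then so does y, so the initial states coincide.  Otherwise x
   never vanishes, and differentiating the heat balance and eliminating y yields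
   J1 (E1 - E2) T'/T^2 = J1 k1 e^{-E1/T} - (J1 + J2) k2 e^{-E2/T}.  For E1 = E2 this
   contradicts (J1 + J2) k2 <> J1 k1; for E1 <> E2 it says T' = G(T), the triggering
   condition holds along the solution, and (A1) or (A2) makes T drift by at least
   a r >= Tmax - Tmin inside (Tmin, Tmax), which is impossible. *)

Definition right_cont0 (f : R -> R) : Prop := filterlim f (at_right 0) (locally (f 0)).

Lemma right_cont0_of_continuous (f : R -> R) : continuous f 0 -> right_cont0 f.
Proof. intros Hf. exact (filterlim_filter_le_1 _ (filter_le_within _) Hf). Qed.

Lemma right_cont0_of_ex_derive (f : R -> R) : ex_derive f 0 -> right_cont0 f.
Proof. intros Hf. apply right_cont0_of_continuous, (@ex_derive_continuous R_AbsRing), Hf. Qed.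

Lemma right_cont0_plus (f g : R -> R) :
  right_cont0 f -> right_cont0 g -> right_cont0 (fun t => f t + g t).
Proof.
  intros Hf Hg. exact (filterlim_comp_2 _ _ _ Hf Hg (@filterlim_plus R_AbsRing R_NormedModule _ _)).
Qed.

Lemma right_cont0_mult (f g : R -> R) :
  right_cont0 f -> right_cont0 g -> right_cont0 (fun t => f t * g t).
Proof.
  intros Hf Hg. exact (filterlim_comp_2 _ _ _ Hf Hg (@filterlim_mult R_AbsRing _ _)).
Qed.

Lemma right_cont0_scal (c : R) (f : R -> R) : right_cont0 f -> right_cont0 (fun t => c * f t).
Proof. apply right_cont0_mult, right_cont0_of_continuous, continuous_const. Qed.

Lemma right_cont0_minus (f g : R -> R) :
  right_cont0 f -> right_cont0 g -> right_cont0 (fun t => f t - g t).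
Proof.
  intros Hf Hg.
  assert (H := right_cont0_plus f (fun t => -1 * g t) Hf (right_cont0_scal (-1) g Hg)).
  unfold right_cont0 in *. replace (f 0 - g 0) with (f 0 + -1 * g 0) by ring.
  eapply filterlim_ext; [|exact H]. intros t; simpl; ring.
Qed.

Lemma at_right_lt (x y : R) : x < y -> at_right x (fun t => x < t < y).
Proof.
  intros Hxy. exists (mkposreal (y - x) ltac:(lra)). intros t Ht Hxt.
  change (Rabs (t - x) < y - x) in Ht. apply Rabs_lt_between in Ht. lra.
Qed.

Lemma at_left_gt (x y : R) : y < x -> at_left x (fun t => y < t < x).
Proof.
  intros Hxy. exists (mkposreal (x - y) ltac:(lra)). intros t Ht Htx.
  change (Rabs (t - x) < x - y) in Ht. apply Rabs_lt_between in Ht. lra.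
Qed.

Lemma right_cont0_eq0 (f : R -> R) (r : R) :
  0 < r -> right_cont0 f -> (forall t, 0 < t < r -> f t = 0) -> f 0 = 0.
Proof.
  intros Hr Hf Hz.
  apply (@filterlim_locally_unique R R_AbsRing R_NormedModule (at_right 0) _ f); [exact Hf|].
  apply (filterlim_ext_loc (fun _ => 0)); [|apply filterlim_const].
  generalize (at_right_lt 0 r Hr); apply filter_imp.
  intros t Ht. symmetry. apply Hz, Ht.
Qed.

Lemma le_of_is_derive_nonneg (g dg : R -> R) (a b : R) : a < b ->
  (forall t, a <= t <= b -> is_derive g t (dg t)) ->
  (forall t, a <= t <= b -> 0 <= dg t) -> g a <= g b.
Proof.
  intros Hab Hd Hp.
  destruct (MVT_gen g a b dg) as [c [Hc Hgc]];
    rewrite ?Rmin_left, ?Rmax_right in * by lra.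
  - intros t Ht. apply Hd. lra.
  - intros t Ht. apply continuity_pt_filterlim, (@ex_derive_continuous R_AbsRing).
    exists (dg t). apply Hd, Ht.
  - assert (0 <= dg c * (b - a)) by (apply Rmult_le_pos; [apply Hp, Hc|lra]). lra.
Qed.

Lemma le_from0_of_is_derive_nonneg (g dg : R -> R) (s : R) : 0 < s -> right_cont0 g ->
  (forall t, 0 < t <= s -> is_derive g t (dg t)) ->
  (forall t, 0 < t < s -> 0 <= dg t) -> g 0 <= g s.
Proof.
  intros Hs Hg Hd Hp.
  assert (Hle : forall u v, 0 < u < v -> v < s -> g u <= g v).
  { intros u v Huv Hvs. apply (le_of_is_derive_nonneg g dg); [lra| |];
      intros t Ht; [apply Hd|apply Hp]; lra. }
  assert (H0 : forall v, 0 < v < s -> g 0 <= g v).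
  { intros v Hv.
    apply (filterlim_le (F := at_right 0) g (fun _ => g v) (g 0) (g v));
      [|exact Hg|apply filterlim_const].
    generalize (at_right_lt 0 v (proj1 Hv)); apply filter_imp. intros u Hu. apply Hle; lra. }
  apply (filterlim_le (F := at_left s) (fun _ => g 0) g (g 0) (g s)); [| apply filterlim_const |].
  - generalize (at_left_gt s 0 Hs); apply filter_imp. exact H0.
  - apply (filterlim_filter_le_1 _ (filter_le_within _)), (@ex_derive_continuous R_AbsRing).
    exists (dg s). apply Hd. lra.
Qed.

Lemma gronwall_le (f df : R -> R) (k s : R) : 0 < s -> right_cont0 f ->
  (forall t, 0 < t <= s -> is_derive f t (df t)) ->
  (forall t, 0 < t < s -> 0 <= df t + k * f t) -> f 0 <= f s * exp (k * s).
Proof.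
  intros Hs Hf Hd Hp.
  assert (Hexp : forall t, is_derive (fun u => exp (k * u)) t (k * exp (k * t)))
    by (intros t; auto_derive; [easy|ring]).
  replace (f 0) with (f 0 * exp (k * 0)) by (rewrite Rmult_0_r, exp_0; ring).
  apply (le_from0_of_is_derive_nonneg (fun t => f t * exp (k * t))
           (fun t => (df t + k * f t) * exp (k * t)) s Hs).
  - apply right_cont0_mult; [exact Hf|]. apply right_cont0_of_ex_derive. eexists. apply Hexp.
  - intros t Ht.
    replace ((df t + k * f t) * exp (k * t)) with (df t * exp (k * t) + f t * (k * exp (k * t))) by ring.
    exact (is_derive_mult f (fun u => exp (k * u)) t _ _ (Hd t Ht) (Hexp t) Rmult_comm).
  - intros t Ht. apply Rmult_le_pos; [apply Hp, Ht|apply Rlt_le, exp_pos].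
Qed.

Lemma gronwall_pos (f df : R -> R) (k s : R) : 0 < s -> right_cont0 f -> 0 < f 0 ->
  (forall t, 0 < t <= s -> is_derive f t (df t)) ->
  (forall t, 0 < t < s -> 0 <= df t + k * f t) -> 0 < f s.
Proof.
  intros Hs Hf Hf0 Hd Hp.
  assert (H := gronwall_le f df k s Hs Hf Hd Hp). assert (He := exp_pos (k * s)).
  destruct (Rlt_or_le 0 (f s)) as [Hfs|Hfs]; [exact Hfs|nra].
Qed.

Lemma interval_invariant_step (z dz : R -> R) (lo hi k s : R) : 0 < s -> right_cont0 z ->
  lo < z 0 < hi -> (forall t, 0 < t <= s -> is_derive z t (dz t)) ->
  (forall t, 0 < t < s -> 0 <= dz t + k * (z t - lo) /\ 0 <= - dz t + k * (hi - z t)) ->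
  lo < z s < hi.
Proof.
  intros Hs Hz Hz0 Hd Hm.
  enough (0 < z s - lo /\ 0 < hi - z s) by lra. split.
  - apply (gronwall_pos (fun t => z t - lo) dz k s Hs); [|lra| |apply Hm].
    + apply right_cont0_minus; [exact Hz|apply right_cont0_of_continuous, continuous_const].
    + intros t Ht. replace (dz t) with (dz t - 0) by ring.
      apply (is_derive_minus z (fun _ => lo)); [apply Hd, Ht|exact (is_derive_const _ t)].
  - apply (gronwall_pos (fun t => hi - z t) (fun t => - dz t) k s Hs); [|lra| |apply Hm].
    + apply right_cont0_minus; [apply right_cont0_of_continuous, continuous_const|exact Hz].
    + intros t Ht. replace (- dz t) with (0 - dz t) by ring.
      apply (is_derive_minus (fun _ => hi) z); [exact (is_derive_const _ t)|apply Hd, Ht].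
Qed.

Lemma le_add_mul_of_is_derive_ge (g dg : R -> R) (a r : R) : 0 < r -> right_cont0 g ->
  (forall t, 0 < t <= r -> is_derive g t (dg t)) ->
  (forall t, 0 < t < r -> a <= dg t) -> g 0 + a * r <= g r.
Proof.
  intros Hr Hg Hd Hp.
  enough (g 0 - a * 0 <= g r - a * r) by lra.
  apply (le_from0_of_is_derive_nonneg (fun t => g t - a * t) (fun t => dg t - a) r Hr).
  - apply right_cont0_minus; [exact Hg|].
    apply right_cont0_scal, right_cont0_of_continuous, continuous_id.
  - intros t Ht. replace (dg t - a) with (dg t - a * 1) by ring.
    apply (is_derive_minus g (fun u => a * u)); [apply Hd, Ht|].
    apply is_derive_scal. exact (is_derive_id t).
  - intros t Ht. specialize (Hp t Ht). lra.
Qed.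

Lemma is_derive_eq_on_interval (f g : R -> R) (a b t d1 d2 : R) : a < t < b ->
  (forall u, a < u < b -> f u = g u) -> is_derive f t d1 -> is_derive g t d2 -> d1 = d2.
Proof.
  intros Ht Hfg Hf Hg.
  assert (Hloc : locally t (fun u => f u = g u)).
  { generalize (open_and _ _ (open_gt a) (open_lt b) t Ht). apply filter_imp. exact Hfg. }
  rewrite <- (is_derive_unique g t d1 (is_derive_ext_loc f g t d1 Hloc Hf)).
  exact (is_derive_unique g t d2 Hg).
Qed.

Lemma interval_persists_right (f : R -> R) (s lo hi : R) :
  (forall t, 0 < t -> ex_derive f t) -> right_cont0 f -> 0 <= s -> lo < f s < hi ->
  at_right s (fun v => lo < f v < hi).
Proof.
  intros Hd Hf Hs Hfs.
  assert (Hnb : locally (f s) (fun y => lo < y < hi))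
    by exact (open_and _ _ (open_gt lo) (open_lt hi) (f s) Hfs).
  destruct Hs as [Hs|<-]; [|exact (Hf _ Hnb)].
  apply filter_le_within, ((@ex_derive_continuous R_AbsRing R_NormedModule f s (Hd s Hs)) _ Hnb).
Qed.

Lemma forward_induction (P : R -> Prop) : P 0 ->
  (forall s, 0 <= s -> P s -> at_right s P) ->
  (forall s, 0 < s -> (forall v, 0 <= v < s -> P v) -> P s) ->
  forall t, 0 <= t -> P t.
Proof.
  intros P0 Hstep Hclosed t Ht. apply NNPP. intros Hnt.
  set (E := fun u => 0 <= u <= t /\ forall v, 0 <= v <= u -> P v).
  assert (E0 : E 0) by (split; [lra|intros v Hv; replace v with 0 by lra; exact P0]).
  destruct (completeness E) as [s [Hub Hlub]];
    [exists t; intros u [Hu _]; lra|exists 0; exact E0|].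
  assert (Hs0 : 0 <= s) by exact (Hub 0 E0).
  assert (Hst : s <= t) by (apply Hlub; intros u [Hu _]; lra).
  assert (Hbelow : forall v, 0 <= v < s -> P v).
  { intros v Hv. apply NNPP. intros Hnv.
    assert (s <= v); [|lra]. apply Hlub. intros u [Hu HPu].
    destruct (Rle_or_lt u v) as [Huv|Hvu]; [exact Huv|]. exfalso. apply Hnv, HPu. lra. }
  assert (Ps : P s) by (destruct Hs0 as [Hs0|<-]; [exact (Hclosed s Hs0 Hbelow)|exact P0]).
  assert (Hst' : s < t) by (destruct Hst as [Hst| ->]; [exact Hst|contradiction]).
  destruct (Hstep s Hs0 Ps) as [d Hdv].
  set (w := s + Rmin d (t - s) / 2).
  assert (0 < Rmin d (t - s) <= d) by (split; [apply Rmin_glb_lt; [apply cond_pos|lra]|apply Rmin_l]).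
  assert (Rmin d (t - s) <= t - s) by apply Rmin_r.
  assert (Ew : E w).
  { split; [unfold w; lra|]. intros v Hv. unfold w in Hv.
    destruct (Rtotal_order v s) as [Hvs|[-> | Hvs]]; [apply Hbelow; lra|exact Ps|].
    apply Hdv; [|exact Hvs]. change (Rabs (v - s) < d). rewrite Rabs_pos_eq; lra. }
  assert (w <= s) by exact (Hub w Ew). unfold w in *. lra.
Qed.

Lemma is_derive_square (f : R -> R) (t df : R) :
  is_derive f t df -> is_derive (fun u => f u * f u) t (2 * f t * df).
Proof.
  intros Hf. replace (2 * f t * df) with (df * f t + f t * df) by ring.
  exact (is_derive_mult f f t df df Hf Hf Rmult_comm).
Qed.

Section LinearDecay.

Variables (z c : R -> R) (K r : R).
Hypothesis z_right_cont0 : right_cont0 z.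
Hypothesis z_derive : forall t, 0 < t <= r -> is_derive z t (- c t * z t).
Hypothesis c_bounds : forall t, 0 < t < r -> 0 <= c t <= K.

Lemma linear_decay_eq0 : z 0 = 0 -> forall s, 0 < s <= r -> z s = 0.
Proof.
  intros Hz0 s Hs.
  assert (H : -1 * (z 0 * z 0) <= -1 * (z s * z s)).
  { apply (le_from0_of_is_derive_nonneg (fun t => -1 * (z t * z t))
             (fun t => 2 * c t * (z t * z t)) s (proj1 Hs)).
    - apply right_cont0_scal, right_cont0_mult; exact z_right_cont0.
    - intros t Ht. replace (2 * c t * (z t * z t)) with (-1 * (2 * z t * (- c t * z t))) by ring.
      apply is_derive_scal, is_derive_square, z_derive. lra.
    - intros t Ht. specialize (c_bounds t ltac:(lra)). nra. }
  rewrite Hz0 in H. nra.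
Qed.

Lemma linear_decay_neq0 : z 0 <> 0 -> forall s, 0 < s <= r -> z s <> 0.
Proof.
  intros Hz0 s Hs.
  assert (H : 0 < z s * z s).
  { apply (gronwall_pos (fun t => z t * z t) (fun t => 2 * z t * (- c t * z t))
             (2 * K) s (proj1 Hs)).
    - apply right_cont0_mult; exact z_right_cont0.
    - nra.
    - intros t Ht. apply is_derive_square, z_derive. lra.
    - intros t Ht. specialize (c_bounds t ltac:(lra)). nra. }
  intros Hzs. rewrite Hzs in H. lra.
Qed.

End LinearDecay.

Lemma exp_neg_div_le1 (E T : R) : 0 <= E -> 0 < T -> exp (- E / T) <= 1.
Proof.
  intros HE HT.
  assert (H : - E / T <= 0) by (unfold Rdiv; assert (0 <= E * / T) by
    (apply Rmult_le_pos; [lra|apply Rlt_le, Rinv_0_lt_compat, HT]); lra).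
  rewrite <- exp_0. destruct H as [H| ->]; [apply Rlt_le, exp_increasing, H|lra].
Qed.

Lemma exp_neg_div_split (E1 E2 T : R) : T <> 0 ->
  exp (- E1 / T) = exp (- E2 / T) * exp ((E2 - E1) / T).
Proof. intros HT. rewrite <- exp_plus. f_equal. field. exact HT. Qed.

Lemma is_derive_exp_neg_div (E : R) (T : R -> R) (t dT : R) : is_derive T t dT -> T t <> 0 ->
  is_derive (fun u => exp (- E / T u)) t (E * dT / T t ^ 2 * exp (- E / T t)).
Proof.
  intros HT HT0.
  replace (E * dT / T t ^ 2 * exp (- E / T t)) with ((- E * (- dT / T t ^ 2)) * exp (- E / T t))
    by (field; exact HT0).
  apply (is_derive_comp exp (fun u => - E / T u)); [apply is_derive_exp|].
  apply is_derive_scal, is_derive_inv; assumption.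
Qed.

Lemma two_rate_balance (J1 J2 k1 k2 E1 E2 e1 e2 q u w : R) : k1 * u <> 0 ->
  J1 * k1 * u + J2 * k2 * w = 0 ->
  J1 * k1 * ((E1 * q - k1 * e1) * u) + J2 * k2 * ((E2 * q - k2 * e2) * w + k1 * e2 * u) = 0 ->
  J1 * (E1 - E2) * q = J1 * k1 * e1 - (J1 + J2) * k2 * e2.
Proof.
  intros Hu Hbal Hder.
  (* Subtracting [(E2 q - k2 e2)] times the balance from its derivative eliminates [w]. *)
  apply (Rmult_eq_reg_l (k1 * u)); [|exact Hu].
  transitivity (J1 * k1 * ((E1 * q - k1 * e1) * u) + J2 * k2 * ((E2 * q - k2 * e2) * w + k1 * e2 * u)
                - (E2 * q - k2 * e2) * (J1 * k1 * u + J2 * k2 * w)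
                + k1 * u * (J1 * k1 * e1 - (J1 + J2) * k2 * e2)); [ring|].
  rewrite Hbal, Hder. ring.
Qed.

Section Reactor.

Variables J1 J2 k1 k2 h E1 E2 Ts cAbar cBbar Tmin Tmax : R.
Hypotheses (HJ1 : 0 < J1) (HJ2 : 0 < J2) (Hk1 : 0 < k1) (Hk2 : 0 < k2) (Hh : 0 < h)
  (HE1 : 0 < E1) (HE2 : 0 < E2) (HcAbar : 0 < cAbar) (HTmin : 0 < Tmin) (HTminTs : Tmin <= Ts).
Hypothesis HcB1 : E1 >= E2 -> k1 / k2 * cAbar < cBbar.
Hypothesis HcB2 : E1 < E2 -> k1 / k2 * exp ((E2 - E1) / Tmin) * cAbar < cBbar.
Hypothesis HTmax : (J1 * k1 * cAbar + J2 * k2 * cBbar) / h + Ts <= Tmax.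

Local Notation in_D_Omega := (in_state_set cAbar cBbar Tmin Tmax).

Lemma rate_ratio_bound (T : R) : Tmin < T -> k1 * exp ((E2 - E1) / T) * cAbar <= k2 * cBbar.
Proof.
  intros HT.
  assert (Hcb : forall c, 0 < c -> k1 / k2 * c * cAbar < cBbar -> k1 * c * cAbar < k2 * cBbar).
  { intros c Hc Hlt. apply (Rmult_lt_compat_l k2) in Hlt; [|lra]. field_simplify in Hlt; lra. }
  destruct (Rlt_or_le E1 E2) as [HE|HE].
  - assert (exp ((E2 - E1) / T) <= exp ((E2 - E1) / Tmin)).
    { apply Rlt_le, exp_increasing. unfold Rdiv. apply Rmult_lt_compat_l; [lra|].
      apply Rinv_lt_contravar; [apply Rmult_lt_0_compat|]; lra. }
    assert (k1 * exp ((E2 - E1) / Tmin) * cAbar < k2 * cBbar)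
      by (apply Hcb, HcB2, HE; apply exp_pos).
    assert (k1 * exp ((E2 - E1) / T) * cAbar <= k1 * exp ((E2 - E1) / Tmin) * cAbar); [|lra].
    apply Rmult_le_compat_r; [|apply Rmult_le_compat_l]; lra.
  - assert (exp ((E2 - E1) / T) <= 1)
      by (replace ((E2 - E1) / T) with (- (E1 - E2) / T) by (field; lra);
          apply exp_neg_div_le1; lra).
    assert (k1 * 1 * cAbar < k2 * cBbar) by (apply Hcb; [lra|]; rewrite Rmult_1_r; apply HcB1; lra).
    assert (k1 * exp ((E2 - E1) / T) * cAbar <= k1 * 1 * cAbar); [|lra].
    apply Rmult_le_compat_r; [|apply Rmult_le_compat_l]; lra.
Qed.

Lemma f_cA_margins (a b T : R) : in_D_Omega a b T ->
  0 <= f_cA k1 E1 a T + k1 * (a - 0) /\ 0 <= - f_cA k1 E1 a T + k1 * (cAbar - a).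
Proof.
  intros [Ha [_ HT]]. unfold f_cA.
  assert (He := exp_neg_div_le1 E1 T ltac:(lra) ltac:(lra)). assert (He0 := exp_pos (- E1 / T)).
  assert (0 <= exp (- E1 / T) * a <= a) by nra.
  split; nra.
Qed.

Lemma f_cB_margins (a b T : R) : in_D_Omega a b T ->
  0 <= f_cB k1 k2 E1 E2 a b T + k2 * (b - 0) /\ 0 <= - f_cB k1 k2 E1 E2 a b T + k2 * (cBbar - b).
Proof.
  intros [Ha [Hb HT]]. unfold f_cB.
  assert (He2 := exp_pos (- E2 / T)).
  assert (He2' := exp_neg_div_le1 E2 T ltac:(lra) ltac:(lra)).
  assert (Hratio := rate_ratio_bound T (proj1 HT)).
  assert (HR := exp_pos ((E2 - E1) / T)).
  rewrite (exp_neg_div_split E1 E2 T) by lra.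
  set (e := exp (- E2 / T)) in *. set (R0 := exp ((E2 - E1) / T)) in *.
  assert (0 <= k1 * R0 * a <= k2 * cBbar).
  { split; [apply Rmult_le_pos; [apply Rmult_le_pos|]; lra|].
    assert (k1 * R0 * a <= k1 * R0 * cAbar) by (apply Rmult_le_compat_l; nra). lra. }
  assert (0 <= b * (1 - e) /\ 0 <= (cBbar - b) * (1 - e)) by (split; nra).
  split; nra.
Qed.

Lemma f_T_margins (a b T : R) : in_D_Omega a b T ->
  0 <= f_T J1 J2 k1 k2 h E1 E2 Ts a b T + h * (T - Tmin) /\
  0 <= - f_T J1 J2 k1 k2 h E1 E2 Ts a b T + h * (Tmax - T).
Proof.
  intros [Ha [Hb HT]]. unfold f_T.
  assert (He1 := exp_pos (- E1 / T)). assert (He2 := exp_pos (- E2 / T)).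
  assert (He1' := exp_neg_div_le1 E1 T ltac:(lra) ltac:(lra)).
  assert (He2' := exp_neg_div_le1 E2 T ltac:(lra) ltac:(lra)).
  assert (J1 * k1 * cAbar + J2 * k2 * cBbar + h * Ts <= h * Tmax).
  { apply (Rmult_le_compat_l h) in HTmax; [|lra]. field_simplify in HTmax; lra. }
  assert (0 <= J1 * k1 * (exp (- E1 / T) * a)) by (apply Rmult_le_pos; nra).
  assert (0 <= J2 * k2 * (exp (- E2 / T) * b)) by (apply Rmult_le_pos; nra).
  assert (J1 * k1 * (exp (- E1 / T) * a) <= J1 * k1 * cAbar)
    by (apply Rmult_le_compat_l; nra).
  assert (J2 * k2 * (exp (- E2 / T) * b) <= J2 * k2 * cBbar)
    by (apply Rmult_le_compat_l; nra).
  split; nra.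
Qed.

Section Invariance.

Variables cA cB T : R -> R.
Hypothesis sol : is_solution J1 J2 k1 k2 h E1 E2 Ts cA cB T.

Lemma state_set_closed (s : R) : 0 < s ->
  (forall v, 0 <= v < s -> in_D_Omega (cA v) (cB v) (T v)) -> in_D_Omega (cA s) (cB s) (T s).
Proof.
  intros Hs Hin. destruct sol as [Hd [HcA [HcB HT]]].
  destruct (Hin 0 ltac:(lra)) as [HcA0 [HcB0 HT0]].
  split; [|split].
  - apply (interval_invariant_step cA (fun t => f_cA k1 E1 (cA t) (T t)) 0 cAbar k1 s Hs HcA HcA0).
    + intros t Ht. apply Hd. lra.
    + intros t Ht. apply f_cA_margins with (b := cB t), Hin. lra.
  - apply (interval_invariant_step cB (fun t => f_cB k1 k2 E1 E2 (cA t) (cB t) (T t))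
             0 cBbar k2 s Hs HcB HcB0).
    + intros t Ht. apply Hd. lra.
    + intros t Ht. apply f_cB_margins, Hin. lra.
  - apply (interval_invariant_step T (fun t => f_T J1 J2 k1 k2 h E1 E2 Ts (cA t) (cB t) (T t))
             Tmin Tmax h s Hs HT HT0).
    + intros t Ht. apply Hd. lra.
    + intros t Ht. apply f_T_margins, Hin. lra.
Qed.

Lemma state_set_open (s : R) : 0 <= s -> in_D_Omega (cA s) (cB s) (T s) ->
  at_right s (fun v => in_D_Omega (cA v) (cB v) (T v)).
Proof.
  intros Hs [HcA [HcB HT]]. destruct sol as [Hd [rcA [rcB rT]]].
  apply filter_and; [|apply filter_and].
  - apply (interval_persists_right cA); [|exact rcA|exact Hs|exact HcA].
    intros t Ht. exists (f_cA k1 E1 (cA t) (T t)). apply Hd, Ht.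
  - apply (interval_persists_right cB); [|exact rcB|exact Hs|exact HcB].
    intros t Ht. exists (f_cB k1 k2 E1 E2 (cA t) (cB t) (T t)). apply Hd, Ht.
  - apply (interval_persists_right T); [|exact rT|exact Hs|exact HT].
    intros t Ht. exists (f_T J1 J2 k1 k2 h E1 E2 Ts (cA t) (cB t) (T t)). apply Hd, Ht.
Qed.

Lemma state_set_invariant : in_D_Omega (cA 0) (cB 0) (T 0) ->
  forall t, 0 <= t -> in_D_Omega (cA t) (cB t) (T t).
Proof.
  intros H0. apply (forward_induction (fun t => in_D_Omega (cA t) (cB t) (T t)) H0).
  - exact state_set_open.
  - exact state_set_closed.
Qed.

End Invariance.

Lemma eq_G_of_rate_balance (T d : R) : T <> 0 -> E1 <> E2 ->
  J1 * (E1 - E2) * (d / T ^ 2) = J1 * k1 * exp (- E1 / T) - (J1 + J2) * k2 * exp (- E2 / T) ->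
  d = G J1 J2 k1 k2 E1 E2 T.
Proof.
  intros HT HE Hbal.
  replace d with (T ^ 2 * (J1 * (E1 - E2) * (d / T ^ 2)) / (J1 * (E1 - E2)))
    by (field; repeat split; try exact HT; intros Hc; apply HE; lra).
  rewrite Hbal, (exp_neg_div_split E1 E2 T HT). unfold G.
  field; repeat split; try exact HT; intros Hc; apply HE; lra.
Qed.

Lemma trig_of_rate_eq_G (a b T : R) : in_D_Omega a b T -> E1 <> E2 ->
  f_T J1 J2 k1 k2 h E1 E2 Ts a b T = G J1 J2 k1 k2 E1 E2 T -> trig J1 J2 k1 k2 h E1 E2 Ts T.
Proof.
  intros [Ha [Hb HT]] HE HfG. unfold trig.
  replace (T ^ 2 / ((E2 - E1) * J1 * h) * exp (- E2 / T) *
             ((J1 + J2) * k2 - J1 * k1 * exp ((E2 - E1) / T)))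
    with (G J1 J2 k1 k2 E1 E2 T / h) by (unfold G; field; repeat split; lra).
  rewrite <- HfG. unfold f_T.
  assert (0 < J1 * k1 * exp (- E1 / T) * a + J2 * k2 * exp (- E2 / T) * b)
    by (apply Rplus_lt_0_compat; repeat apply Rmult_lt_0_compat; try apply exp_pos; lra).
  replace ((J1 * k1 * exp (- E1 / T) * a + J2 * k2 * exp (- E2 / T) * b + h * (Ts - T)) / h)
    with ((J1 * k1 * exp (- E1 / T) * a + J2 * k2 * exp (- E2 / T) * b) / h + (Ts - T))
    by (field; lra).
  assert (0 < (J1 * k1 * exp (- E1 / T) * a + J2 * k2 * exp (- E2 / T) * b) / h)
    by (apply Rdiv_lt_0_compat; lra).
  lra.
Qed.

Section Observability.

Variables (cA cB T cA' cB' T' : R -> R) (r : R).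
Hypothesis sol : is_solution J1 J2 k1 k2 h E1 E2 Ts cA cB T.
Hypothesis sol' : is_solution J1 J2 k1 k2 h E1 E2 Ts cA' cB' T'.
Hypothesis Hr : 0 < r.
Hypothesis invariant : forall t, 0 <= t -> in_D_Omega (cA t) (cB t) (T t).
Hypothesis outputs_agree : forall t, 0 <= t <= r -> T t = T' t.

Lemma diff_cA_derive (t : R) : 0 < t <= r ->
  is_derive (fun u => cA u - cA' u) t (- (k1 * exp (- E1 / T t)) * (cA t - cA' t)).
Proof.
  intros Ht.
  replace (- (k1 * exp (- E1 / T t)) * (cA t - cA' t))
    with (f_cA k1 E1 (cA t) (T t) - f_cA k1 E1 (cA' t) (T' t))
    by (unfold f_cA; rewrite <- outputs_agree by lra; ring).
  apply (is_derive_minus cA cA'); [apply (proj1 sol)|apply (proj1 sol')]; lra.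
Qed.

Lemma diff_cB_derive (t : R) : 0 < t <= r ->
  is_derive (fun u => cB u - cB' u) t
    (k1 * exp (- E1 / T t) * (cA t - cA' t) - k2 * exp (- E2 / T t) * (cB t - cB' t)).
Proof.
  intros Ht.
  replace (k1 * exp (- E1 / T t) * (cA t - cA' t) - k2 * exp (- E2 / T t) * (cB t - cB' t))
    with (f_cB k1 k2 E1 E2 (cA t) (cB t) (T t) - f_cB k1 k2 E1 E2 (cA' t) (cB' t) (T' t))
    by (unfold f_cB; rewrite <- outputs_agree by lra; ring).
  apply (is_derive_minus cB cB'); [apply (proj1 sol)|apply (proj1 sol')]; lra.
Qed.

Lemma reaction_heat_balance (t : R) : 0 < t < r ->
  J1 * k1 * (exp (- E1 / T t) * (cA t - cA' t)) + J2 * k2 * (exp (- E2 / T t) * (cB t - cB' t)) = 0.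
Proof.
  intros Ht.
  assert (H := is_derive_eq_on_interval T T' 0 r t _ _ Ht
                 (fun u Hu => outputs_agree u ltac:(lra))
                 (proj2 (proj2 (proj1 sol t (proj1 Ht))))
                 (proj2 (proj2 (proj1 sol' t (proj1 Ht))))).
  unfold f_T in H. rewrite <- (outputs_agree t) in H by lra. lra.
Qed.

Lemma cA_rate_bounds (t : R) : 0 < t < r -> 0 <= k1 * exp (- E1 / T t) <= k1.
Proof.
  intros Ht. destruct (invariant t ltac:(lra)) as [_ [_ HT]].
  assert (H := exp_neg_div_le1 E1 (T t) ltac:(lra) ltac:(lra)). assert (H0 := exp_pos (- E1 / T t)).
  split; nra.
Qed.

Lemma right_cont0_diff_cA : right_cont0 (fun u => cA u - cA' u).
Proof. apply right_cont0_minus; [apply (proj2 sol)|apply (proj2 sol')]. Qed.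

Lemma cA_agree_of_initial : cA 0 = cA' 0 -> forall s, 0 < s <= r -> cA s = cA' s.
Proof.
  intros H0 s Hs.
  enough (cA s - cA' s = 0) by lra.
  apply (linear_decay_eq0 (fun u => cA u - cA' u) (fun u => k1 * exp (- E1 / T u)) k1 r);
    [exact right_cont0_diff_cA|exact diff_cA_derive|exact cA_rate_bounds|lra|exact Hs].
Qed.

Lemma cA_disagree_of_initial : cA 0 <> cA' 0 -> forall s, 0 < s <= r -> cA s <> cA' s.
Proof.
  intros H0 s Hs Hs'.
  apply (linear_decay_neq0 (fun u => cA u - cA' u) (fun u => k1 * exp (- E1 / T u)) k1 r
           right_cont0_diff_cA diff_cA_derive cA_rate_bounds) with s; [lra|exact Hs|lra].
Qed.

Lemma initial_states_eq_of_cA_agree : (forall s, 0 < s < r -> cA s = cA' s) ->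
  (cA 0, cB 0, T 0) = (cA' 0, cB' 0, T' 0).
Proof.
  intros HA.
  assert (HB : forall s, 0 < s < r -> cB s - cB' s = 0).
  { intros s Hs. assert (H := reaction_heat_balance s Hs).
    rewrite (HA s Hs), Rminus_diag, Rmult_0_r, Rmult_0_r, Rplus_0_l in H.
    assert (0 < J2 * k2 * exp (- E2 / T s)) by (apply Rmult_lt_0_compat; [nra|apply exp_pos]).
    apply (Rmult_eq_reg_l (J2 * k2 * exp (- E2 / T s))); [lra|lra]. }
  assert (HA0 : cA 0 - cA' 0 = 0).
  { apply (right_cont0_eq0 (fun u => cA u - cA' u) r Hr right_cont0_diff_cA).
    intros s Hs. rewrite (HA s Hs). ring. }
  assert (HB0 : cB 0 - cB' 0 = 0).
  { apply (right_cont0_eq0 (fun u => cB u - cB' u) r Hr); [|exact HB].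
    apply right_cont0_minus; [apply (proj2 sol)|apply (proj2 sol')]. }
  rewrite (outputs_agree 0) by lra.
  replace (cA 0) with (cA' 0) by lra. replace (cB 0) with (cB' 0) by lra. reflexivity.
Qed.

Lemma temperature_rate_balance (t : R) : 0 < t < r -> cA t <> cA' t ->
  J1 * (E1 - E2) * (f_T J1 J2 k1 k2 h E1 E2 Ts (cA t) (cB t) (T t) / T t ^ 2) =
  J1 * k1 * exp (- E1 / T t) - (J1 + J2) * k2 * exp (- E2 / T t).
Proof.
  intros Ht Hne.
  destruct (invariant t ltac:(lra)) as [_ [_ HT]].
  assert (HT0 : T t <> 0) by lra.
  set (dT := f_T J1 J2 k1 k2 h E1 E2 Ts (cA t) (cB t) (T t)).
  assert (DT : is_derive T t dT) by apply (proj1 sol t (proj1 Ht)).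
  (* With [q = T'/T^2] one has [(exp (- E / T))' = E q exp (- E / T)]. *)
  set (q := dT / T t ^ 2). set (e1 := exp (- E1 / T t)). set (e2 := exp (- E2 / T t)).
  set (u := e1 * (cA t - cA' t)). set (w := e2 * (cB t - cB' t)).
  assert (Du : is_derive (fun v => exp (- E1 / T v) * (cA v - cA' v)) t ((E1 * q - k1 * e1) * u)).
  { replace ((E1 * q - k1 * e1) * u)
      with (E1 * dT / T t ^ 2 * e1 * (cA t - cA' t) + e1 * (- (k1 * e1) * (cA t - cA' t)))
      by (unfold u, q; field; exact HT0).
    apply (is_derive_mult (fun v => exp (- E1 / T v)) (fun v => cA v - cA' v));
      [apply is_derive_exp_neg_div, HT0; exact DT|apply diff_cA_derive; lra|intros; apply Rmult_comm]. }
  assert (Dw : is_derive (fun v => exp (- E2 / T v) * (cB v - cB' v)) t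
                 ((E2 * q - k2 * e2) * w + k1 * e2 * u)).
  { replace ((E2 * q - k2 * e2) * w + k1 * e2 * u)
      with (E2 * dT / T t ^ 2 * e2 * (cB t - cB' t) +
            e2 * (k1 * e1 * (cA t - cA' t) - k2 * e2 * (cB t - cB' t)))
      by (unfold u, w, q; field; exact HT0).
    apply (is_derive_mult (fun v => exp (- E2 / T v)) (fun v => cB v - cB' v));
      [apply is_derive_exp_neg_div, HT0; exact DT|apply diff_cB_derive; lra|intros; apply Rmult_comm]. }
  apply (two_rate_balance J1 J2 k1 k2 E1 E2 e1 e2 q u w).
  - apply Rmult_integral_contrapositive. split; [lra|].
    apply Rmult_integral_contrapositive. split; [apply Rgt_not_eq, exp_pos|lra].
  - exact (reaction_heat_balance t Ht).
  - apply (is_derive_eq_on_interval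
             (fun v => J1 * k1 * (exp (- E1 / T v) * (cA v - cA' v)) +
                       J2 * k2 * (exp (- E2 / T v) * (cB v - cB' v)))
             (fun _ => 0) 0 r t _ _ Ht reaction_heat_balance).
    + apply (is_derive_plus (fun v => J1 * k1 * (exp (- E1 / T v) * (cA v - cA' v))));
        apply is_derive_scal; [exact Du|exact Dw].
    + exact (is_derive_const 0 t).
Qed.

Lemma cA_agree_of_equal_energies : E1 = E2 -> (J1 + J2) * k2 <> J1 * k1 ->
  forall s, 0 < s < r -> cA s = cA' s.
Proof.
  intros HE Hk s Hs. destruct (Req_dec (cA s) (cA' s)) as [Heq|Hne]; [exact Heq|exfalso].
  assert (H := temperature_rate_balance s Hs Hne). rewrite HE, Rminus_diag, Rmult_0_r, Rmult_0_l in H.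
  assert (He := exp_pos (- E2 / T s)).
  apply Hk, (Rmult_eq_reg_r (exp (- E2 / T s))); [|lra]. lra.
Qed.

Lemma temperature_rate_eq_G : E1 <> E2 -> cA 0 <> cA' 0 -> forall t, 0 < t < r ->
  f_T J1 J2 k1 k2 h E1 E2 Ts (cA t) (cB t) (T t) = G J1 J2 k1 k2 E1 E2 (T t).
Proof.
  intros HE H0 t Ht. destruct (invariant t ltac:(lra)) as [_ [_ HT]].
  apply eq_G_of_rate_balance; [lra|exact HE|].
  apply temperature_rate_balance, (cA_disagree_of_initial H0); lra.
Qed.

Lemma drift_lt_range (a : R) : E1 <> E2 -> cA 0 <> cA' 0 ->
  cond_A1 J1 J2 k1 k2 h E1 E2 Ts Tmin Tmax a \/ cond_A2 J1 J2 k1 k2 h E1 E2 Ts Tmin Tmax a ->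
  a * r < Tmax - Tmin.
Proof.
  intros HE H0 Hcond.
  assert (HG : forall t, 0 < t < r -> (Tmin < T t < Tmax) /\
            f_T J1 J2 k1 k2 h E1 E2 Ts (cA t) (cB t) (T t) = G J1 J2 k1 k2 E1 E2 (T t) /\
            trig J1 J2 k1 k2 h E1 E2 Ts (T t)).
  { intros t Ht. assert (Hin := invariant t ltac:(lra)).
    assert (HfG := temperature_rate_eq_G HE H0 t Ht).
    split; [apply Hin|split; [exact HfG|exact (trig_of_rate_eq_G _ _ _ Hin HE HfG)]]. }
  assert (DT : forall t, 0 < t <= r ->
                 is_derive T t (f_T J1 J2 k1 k2 h E1 E2 Ts (cA t) (cB t) (T t)))
    by (intros t Ht; apply (proj1 sol t (proj1 Ht))).
  destruct (invariant 0 ltac:(lra)) as [_ [_ HT0]]. destruct (invariant r ltac:(lra)) as [_ [_ HTr]].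
  destruct Hcond as [HA1|HA2].
  - assert (H : -1 * T 0 + a * r <= -1 * T r); [|lra].
    apply (le_add_mul_of_is_derive_ge (fun t => -1 * T t)
             (fun t => -1 * f_T J1 J2 k1 k2 h E1 E2 Ts (cA t) (cB t) (T t)) a r Hr).
    + apply right_cont0_scal, (proj2 (proj2 (proj2 sol))).
    + intros t Ht. apply is_derive_scal, DT, Ht.
    + intros t Ht. destruct (HG t Ht) as [HT [HfG Htrig]].
      rewrite HfG. specialize (HA1 (T t) HT Htrig). lra.
  - assert (H : T 0 + a * r <= T r); [|lra].
    apply (le_add_mul_of_is_derive_ge T
             (fun t => f_T J1 J2 k1 k2 h E1 E2 Ts (cA t) (cB t) (T t)) a r Hr
             (proj2 (proj2 (proj2 sol))) DT).
    intros t Ht. destruct (HG t Ht) as [HT [HfG Htrig]].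
    rewrite HfG. specialize (HA2 (T t) HT Htrig). lra.
Qed.

Lemma initial_states_eq_of_outputs_agree (a : R) :
  (E1 = E2 -> (J1 + J2) * k2 <> J1 * k1) ->
  (E1 <> E2 -> 0 < a /\ (cond_A1 J1 J2 k1 k2 h E1 E2 Ts Tmin Tmax a \/
                         cond_A2 J1 J2 k1 k2 h E1 E2 Ts Tmin Tmax a)) ->
  (E1 <> E2 -> Tmax - Tmin <= a * r) ->
  (cA 0, cB 0, T 0) = (cA' 0, cB' 0, T' 0).
Proof.
  intros Heq Hneq Hr_a. apply initial_states_eq_of_cA_agree.
  destruct (Req_dec E1 E2) as [HE|HE].
  - exact (cA_agree_of_equal_energies HE (Heq HE)).
  - destruct (Req_dec (cA 0) (cA' 0)) as [H0|H0].
    + intros s Hs. apply cA_agree_of_initial; [exact H0|lra].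
    + exfalso. assert (H := drift_lt_range a HE H0 (proj2 (Hneq HE))).
      specialize (Hr_a HE). lra.
Qed.

End Observability.

End Reactor.

Theorem mainTheorem5
  (J1 J2 k1 k2 h E1 E2 Ts cAbar cBbar Tmin Tmax a : R)
  (HJ1 : 0 < J1) (HJ2 : 0 < J2) (Hk1 : 0 < k1) (Hk2 : 0 < k2) (Hh : 0 < h)
  (HE1 : 0 < E1) (HE2 : 0 < E2) (HTs : 0 < Ts)
  (HcAbar : 0 < cAbar) (HTmin : 0 < Tmin) (HTminTs : Tmin <= Ts)
  (HcB1 : E1 >= E2 -> k1 / k2 * cAbar < cBbar)
  (HcB2 : E1 < E2 -> k1 / k2 * exp ((E2 - E1) / Tmin) * cAbar < cBbar)
  (HTmax : (J1 * k1 * cAbar + J2 * k2 * cBbar) / h + Ts <= Tmax)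
  (Heq : E1 = E2 -> (J1 + J2) * k2 <> J1 * k1)
  (Hneq : E1 <> E2 ->
     0 < a /\ (cond_A1 J1 J2 k1 k2 h E1 E2 Ts Tmin Tmax a \/
               cond_A2 J1 J2 k1 k2 h E1 E2 Ts Tmin Tmax a)) :
  forall r : R, 0 < r ->
    (E1 <> E2 -> (Tmax - Tmin) / a <= r) ->
    strongly_observable J1 J2 k1 k2 h E1 E2 Ts cAbar cBbar Tmin Tmax r.
Proof.
  intros r Hr Hra cA cB T cA' cB' T' sol sol' in0 _ Hne.
  apply NNPP. intros Hno. apply Hne.
  assert (agree : forall t, 0 <= t <= r -> T t = T' t)
    by (intros t Ht; apply NNPP; intros HTt; apply Hno; exists t; split; assumption).
  assert (Hr_a : E1 <> E2 -> Tmax - Tmin <= a * r).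
  { intros HE. destruct (Hneq HE) as [Ha _]. specialize (Hra HE).
    apply (Rmult_le_compat_l a) in Hra; [|lra]. field_simplify in Hra; lra. }
  exact (initial_states_eq_of_outputs_agree J1 J2 k1 k2 h E1 E2 Ts cAbar cBbar Tmin Tmax
           HJ1 HJ2 Hk1 Hk2 Hh HE1 HTmin cA cB T cA' cB' T' r sol sol' Hr
           (state_set_invariant J1 J2 k1 k2 h E1 E2 Ts cAbar cBbar Tmin Tmax
              HJ1 HJ2 Hk1 Hk2 Hh HE1 HE2 HcAbar HTmin HTminTs HcB1 HcB2 HTmax cA cB T sol in0)
           agree a Heq Hneq Hr_a).
Qed.
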